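(* Suppose $\bm X \in \mathscr{E}_4^N$ and $\bm Y$ is a degree 4 pseudomoment matrix extending $\bm X$. Then $\bm Y \succeq \mathrm{vec}(\bm X)\mathrm{vec}(\bm X)^\top$, and every eigenvector of $\bm Y - \mathrm{vec}(\bm X)\mathrm{vec}(\bm X)^\top$ with nonzero eigenvalue lies in the subspace $\mathrm{vec}(\mathsf{pert}_{\mathscr{E}_2^N}(\bm X)) \subset \mathbb{R}^{N^2}$. Consequently, $$\mathrm{rank}(\bm Y) \le \dim \mathsf{pert}_{\mathscr{E}_2^N}(\bm X) + 1 = \frac{\mathrm{rank}(\bm X)(\mathrm{rank}(\bm X)+1)}{2} - \mathrm{rank}(\bm X^{\odot 2}) + 1 \le \frac{\mathrm{rank}(\bm X)(\mathrm{rank}(\bm X)+1)}{2}.$$ In particular, if $\bm X$ is an extreme point of $\mathscr{E}_2^N$ and is extended by some degree 4 pseudomoment matrix $\bm Y$, then $\mathrm{rank}(\bm Y) = \mathrm{rank}(\bm X) = 1$, and $\bm X = \bm x\bm x^\top$, $\bm Y = (\bm x\otimes\bm x)(\bm x\otimes \bm x)^\top$ for some $\bm x \in \{\pm1\}^N$.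
   Context: $\mathscr{E}_2^N := \{\bm X \in \mathbb{R}^{N\times N}_{\mathrm{sym}} : \bm X\succeq 0,\ X_{ii} = 1 \ \forall i\}$ (the elliptope). For a closed convex set $K$ in a real vector space $E$ and $\bm X \in K$, $\mathsf{pert}_K(\bm X) := \{\bm A \in E : \bm X \pm t\bm A \in K \text{ for all sufficiently small } t>0\}$; here $E = \mathbb{R}^{N\times N}_{\mathrm{sym}}$. For $\bm A \in \mathbb{R}^{N\times N}$, $\mathrm{vec}(\bm A)\in\mathbb{R}^{N^2}$ has entries $\mathrm{vec}(\bm A)_{(ij)} = A_{ij}$, indices $(ij)$ ordered lexicographically. $\bm X^{\odot 2}$ is the entrywise square of $\bm X$. A degree 4 pseudomoment matrix is a matrix $\bm Y \in \mathbb{R}^{N^2\times N^2}$, rows and columns indexed by pairs $(ij)\in[N]^2$ (lexicographically ordered), such that: (1) $\bm Y\succeq 0$; (2) $Y_{(ij)(kk)}$ does not depend on $k$; (3) $Y_{(ii)(ii)} = 1$ for all $i$; (4) $Y_{(ij)(k\ell)}$ is invariant under all permutations of the four indices $i,j,k,\ell$. Such $\bm Y$ extends $\bm X\in\mathbb{R}^{N\times N}_{\mathrm{sym}}$ if $Y_{(1i)(1j)} = X_{ij}$ for all $i,j$. $\mathscr{E}_4^N$ is the set of symmetric $\bm X \in \mathbb{R}^{N\times N}$ that are extended by some degree 4 pseudomoment matrix. *)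

From HB Require Import structures.
From mathcomp Require Import all_boot all_order all_algebra.
Set Implicit Arguments. Unset Strict Implicit. Unset Printing Implicit Defensive.
Import Order.TTheory GRing.Theory Num.Theory.
Local Open Scope ring_scope.

Section Defs.
Variable R : realFieldType.

Definition psd (n : nat) (A : 'M[R]_n) : Prop :=
  A^T = A /\ forall v : 'cV[R]_n, 0 <= (v^T *m A *m v) 0 0.

Definition elliptope2 (N : nat) (X : 'M[R]_N) : Prop :=
  X^T = X /\ psd X /\ forall i, X i i = 1.

Definition pertE2 (N : nat) (X A : 'M[R]_N) : Prop :=
  A^T = A /\ exists2 eps : R, 0 < eps &
    forall t : R, 0 < t -> t < eps ->
      elliptope2 (X + t *: A) /\ elliptope2 (X - t *: A).

(* vec(A), indices (ij) ordered lexicographically via mxvec_index *)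
Definition vecc (N : nat) (A : 'M[R]_N) : 'cV[R]_(N * N) := (mxvec A)^T.

Definition Yent (N : nat) (Y : 'M[R]_(N * N)) (i j k l : 'I_N) : R :=
  Y (mxvec_index i j) (mxvec_index k l).

Definition pseudomoment4 (N : nat) (Y : 'M[R]_(N * N)) : Prop :=
  [/\ psd Y,
      (forall i j k k', Yent Y i j k k = Yent Y i j k' k'),
      (forall i, Yent Y i i i i = 1) &
      (forall i j k l,
         [/\ Yent Y i j k l = Yent Y j i k l,
             Yent Y i j k l = Yent Y k j i l &
             Yent Y i j k l = Yent Y i j l k])].

(* Y extends X : Y_{(1i)(1j)} = X_ij (index 1 is the first index, ord0) *)
Definition extends (N : nat) (Y : 'M[R]_(N.+1 * N.+1)) (X : 'M[R]_N.+1) : Prop :=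
  forall i j, Yent Y ord0 i ord0 j = X i j.

Definition elliptope4 (N : nat) (X : 'M[R]_N.+1) : Prop :=
  X^T = X /\ exists Y, pseudomoment4 Y /\ extends Y X.

Definition hadamard_sq (N : nat) (X : 'M[R]_N) : 'M[R]_N :=
  \matrix_(i, j) (X i j ^+ 2).

Definition extreme_E2 (N : nat) (X : 'M[R]_N) : Prop :=
  elliptope2 X /\
  forall (A B : 'M[R]_N) (t : R), elliptope2 A -> elliptope2 B ->
    0 < t -> t < 1 -> X = t *: A + (1 - t) *: B -> A = X /\ B = X.

End Defs.

From HB Require Import structures.
From mathcomp Require Import all_boot all_order all_algebra.
From mathcomp Require Import ring lra zify.
Set Implicit Arguments. Unset Strict Implicit. Unset Printing Implicit Defensive.
Import Order.TTheory GRing.Theory Num.Theory.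
Import VectorInternalTheory.
Local Open Scope ring_scope.

(* Let Y extend X and put G := Y - vec X vec X^T.  The (00) column of Y is
   vec X and Y_(00)(00) = 1, so G is the Schur complement of that entry and
   hence psd.  Every column of G is vec A for a symmetric A with zero
   diagonal vanishing on ker X: for v in ker X the vector p = vec(e_k v^T)
   has p^T Y p = v^T X v = 0, so p is isotropic for G and G p = 0.  Such
   matrices are exactly pert_{E_2}(X) (pertE2P): X +- t A stays psd since
   A = X B X is dominated by X.  Hence eigenvectors of G lie in vec(pert),
   and rank Y <= dim pert + 1.  The dimension count: symmetric matrices
   with rows in the row space of X are B^T C B for a row basis B, a space
   of dimension r(r+1)/2; pert is the kernel of the diagonal map on it,
   whose image is the row space of the entrywise square of X (trace
   orthogonality uses X diag(c) X = 0 when X^{o2} c = 0, proved via a Gram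
   decomposition of X).  At an extreme point pert = 0, so Y = vec X vec X^T. *)

Section PsdForms.
Variable R : realFieldType.
Implicit Types n : nat.

Definition bform n (M : 'M[R]_n) (u v : 'cV[R]_n) : R := (u^T *m M *m v) 0 0.

Lemma bformE n (M : 'M[R]_n) u v :
  bform M u v = \sum_i \sum_j u i 0 * M i j * v j 0.
Proof.
rewrite /bform mxE; under eq_bigr => j _ do rewrite mxE big_distrl /=.
rewrite exchange_big /=; apply: eq_bigr => i _; apply: eq_bigr => j _.
by rewrite !mxE.
Qed.

Lemma bform_sym n (M : 'M[R]_n) u v : M^T = M -> bform M u v = bform M v u.
Proof.
move=> sM; rewrite /bform -[in RHS]sM.
have -> : (v^T *m M^T *m u) 0 0 = ((v^T *m M^T *m u)^T) 0 0 by rewrite [RHS]mxE.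
by rewrite !trmx_mul !trmxK mulmxA.
Qed.

Lemma bformDl n (M : 'M[R]_n) u v w : bform M (u + v) w = bform M u w + bform M v w.
Proof. by rewrite /bform linearD /= !mulmxDl mxE. Qed.
Lemma bformZl n (M : 'M[R]_n) u v s : bform M (s *: u) v = s * bform M u v.
Proof. by rewrite /bform linearZ /= -!scalemxAl mxE. Qed.
Lemma bformDr n (M : 'M[R]_n) u v w : bform M u (v + w) = bform M u v + bform M u w.
Proof. by rewrite /bform mulmxDr mxE. Qed.
Lemma bformZr n (M : 'M[R]_n) u v s : bform M u (s *: v) = s * bform M u v.
Proof. by rewrite /bform -scalemxAr mxE. Qed.
Lemma bformDm n (A B : 'M[R]_n) u v : bform (A + B) u v = bform A u v + bform B u v.
Proof. by rewrite /bform mulmxDr mulmxDl mxE. Qed.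
Lemma bformBm n (A B : 'M[R]_n) u v : bform (A - B) u v = bform A u v - bform B u v.
Proof. by rewrite bformDm /bform mulmxN mulNmx [in X in _ + X]mxE. Qed.
Lemma bformZm n (A : 'M[R]_n) u v s : bform (s *: A) u v = s * bform A u v.
Proof. by rewrite /bform -scalemxAr -scalemxAl mxE. Qed.

Lemma bform_suml n (M : 'M[R]_n) (I : finType) (u : I -> 'cV[R]_n) v :
  bform M (\sum_i u i) v = \sum_i bform M (u i) v.
Proof. by rewrite /bform linear_sum /= !mulmx_suml summxE. Qed.

Lemma bform_sumr n (M : 'M[R]_n) (I : finType) u (v : I -> 'cV[R]_n) :
  bform M u (\sum_i v i) = \sum_i bform M u (v i).
Proof. by rewrite /bform mulmx_sumr summxE. Qed.

Lemma bform_deltaL n (M : 'M[R]_n) k v : bform M (delta_mx k 0) v = (M *m v) k 0.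
Proof. by rewrite /bform trmx_delta -rowE -row_mul mxE. Qed.

Lemma bform_delta n (M : 'M[R]_n) p q :
  bform M (delta_mx p 0 : 'cV[R]_n) (delta_mx q 0) = M p q.
Proof. by rewrite bform_deltaL -colE mxE. Qed.

Lemma bform_combo n (M : 'M[R]_n) (I J : finType) (a : I -> R) (b : J -> R) f g :
  bform M (\sum_i a i *: (delta_mx (f i) 0 : 'cV[R]_n)) (\sum_j b j *: delta_mx (g j) 0)
  = \sum_i \sum_j a i * b j * M (f i) (g j).
Proof.
rewrite bform_suml; apply: eq_bigr => i _; rewrite bform_sumr; apply: eq_bigr => j _.
by rewrite bformZl bformZr bform_delta mulrA.
Qed.

Lemma mx11_mul (A B : 'M[R]_1) : (A *m B) 0 0 = A 0 0 * B 0 0.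
Proof. by rewrite mxE big_ord1. Qed.

Lemma outerE n (c d : 'cV[R]_n) i j : (c *m d^T) i j = c i 0 * d j 0.
Proof. by rewrite mxE big_ord1 mxE. Qed.

Lemma bform_outer n (c : 'cV[R]_n) u v :
  bform (c *m c^T) u v = (c^T *m u) 0 0 * (c^T *m v) 0 0.
Proof.
rewrite /bform mulmxA -mulmxA mx11_mul; congr (_ * _).
have -> : (u^T *m c) 0 0 = ((u^T *m c)^T) 0 0 by rewrite [RHS]mxE.
by rewrite trmx_mul trmxK.
Qed.

Lemma bform_expand n (M : 'M[R]_n) v w s : M^T = M ->
  bform M (v + s *: w) (v + s *: w) =
  bform M v v + 2 * s * bform M w v + s ^+ 2 * bform M w w.
Proof.
move=> sM; rewrite !(bformDl, bformDr, bformZl, bformZr) (bform_sym v w sM); ring.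
Qed.

Lemma mxsymE n (A : 'M[R]_n) i j : A^T = A -> A i j = A j i.
Proof. by move=> sA; rewrite -[in LHS]sA mxE. Qed.

Lemma psd_kernel n (M : 'M[R]_n) v : psd M -> bform M v v = 0 -> M *m v = 0.
Proof.
move=> [sM pM] q0.
suff H : forall u, bform M u v = 0.
  by apply/colP => i; rewrite -bform_deltaL H mxE.
move=> u; set b := bform M u v; set a := bform M u u.
have a0 : 0 <= a := pM u.
pose d := a + 1; have d0 : 0 < d by rewrite /d; lra.
pose s := - b / d.
have sd : s * d = - b by rewrite /s mulrVK // unitfE gt_eqF.
have : 0 <= bform M (v + s *: u) (v + s *: u) := pM _.
rewrite bform_expand // q0 -/a -/b add0r => h.
have h2 := mulr_ge0 h (sqr_ge0 d).
have e : (2 * s * b + s ^+ 2 * a) * d ^+ 2 = - b ^+ 2 * (a + 2).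
  have -> : (2 * s * b + s ^+ 2 * a) * d ^+ 2 =
            2 * (s * d) * b * d + (s * d) ^+ 2 * a by ring.
  rewrite sd /d; ring.
rewrite e in h2.
have hb : b ^+ 2 <= 0 by nra.
by apply/eqP; rewrite -sqrf_eq0 eq_le hb sqr_ge0.
Qed.

Lemma psd_cauchy_schwarz n (M : 'M[R]_n) u v : psd M ->
  bform M u v ^+ 2 <= bform M u u * bform M v v.
Proof.
move=> psdM; have [sM pM] := psdM.
set a := bform M u u; set b := bform M u v.
have a0 : 0 <= a := pM u.
have [az|apos] : a = 0 \/ 0 < a.
  by move: a0; rewrite le_eqVlt => /orP[/eqP<-|]; [left|right].
  have Mu := psd_kernel psdM az.
  have -> : b = 0 by rewrite /b (bform_sym u v sM) /bform -mulmxA Mu mulmx0 mxE.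
  by rewrite az expr0n /= mul0r.
pose s := - b / a.
have sa : s * a = - b by rewrite /s mulrVK // unitfE gt_eqF.
have : 0 <= bform M (v + s *: u) (v + s *: u) := pM _.
rewrite bform_expand // -/a -/b => h.
have h2 := mulr_ge0 h (ltW apos).
have e : (bform M v v + 2 * s * b + s ^+ 2 * a) * a = a * bform M v v - b ^+ 2.
  have -> : (bform M v v + 2 * s * b + s ^+ 2 * a) * a =
            a * bform M v v + 2 * (s * a) * b + (s * a) ^+ 2 by ring.
  rewrite sa; ring.
rewrite e in h2; lra.
Qed.

Lemma psd_schur n (M : 'M[R]_n) e : psd M -> 0 < bform M e e ->
  psd (M - (bform M e e)^-1 *: ((M *m e) *m (M *m e)^T)).
Proof.
move=> psdM apos; have [sM pM] := psdM; split.
  by rewrite linearB /= linearZ /= trmx_mul trmxK sM.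
move=> v; change (0 <= bform (M - (bform M e e)^-1 *: ((M *m e) *m (M *m e)^T)) v v).
rewrite bformBm bformZm bform_outer.
have -> : ((M *m e)^T *m v) 0 0 = bform M e v by rewrite /bform trmx_mul sM.
have := psd_cauchy_schwarz e v psdM.
rewrite subr_ge0 mulrC -expr2 => h.
by rewrite ler_pdivrMl // mulrC.
Qed.

Lemma psd_zero_diag n (M : 'M[R]_n) p i : psd M -> M p p = 0 -> M i p = 0.
Proof.
move=> psdM Mpp; have := psd_kernel psdM (etrans (bform_delta M p p) Mpp).
by move/(congr1 (fun A : 'cV[R]_n => A i 0)); rewrite -colE !mxE.
Qed.

End PsdForms.

Section Gram.
Variable R : realFieldType.
Implicit Types n : nat.

Definition rank1_sum n (X : 'M[R]_n) : Prop :=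
  exists m (lam : 'I_m -> R) (w : 'I_m -> 'cV[R]_n),
    (forall i, 0 <= lam i) /\ X = \sum_i lam i *: (w i *m (w i)^T).

Lemma rank1_sum_cons n (X : 'M[R]_n) a (c : 'cV[R]_n) :
  rank1_sum X -> 0 <= a -> rank1_sum (a *: (c *m c^T) + X).
Proof.
case=> m [lam [w [l0 ->]]] a0.
exists m.+1, (fun i : 'I_m.+1 => if unlift ord0 i is Some j then lam j else a),
  (fun i : 'I_m.+1 => if unlift ord0 i is Some j then w j else c); split.
  by move=> i; case: (unlift ord0 i).
rewrite big_ord_recl /= unlift_none; congr (_ + _).
by apply: eq_bigr => i _; rewrite liftK.
Qed.

(* Every psd matrix is a Gram sum of rank-one terms: peel off one row at a
   time by Schur complements (symmetric Gaussian elimination). *)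
Lemma psd_rank1_sum n (X : 'M[R]_n) : psd X -> rank1_sum X.
Proof.
move=> psdX.
suff H : forall k (Z : 'M[R]_n), psd Z ->
    (forall i j : 'I_n, (k <= i)%N -> Z i j = 0) -> rank1_sum Z.
  by apply: (H n X psdX) => i j; rewrite leqNgt ltn_ord.
elim=> [|k IH] Z psdZ Zk.
  exists 0, (fun _ => 0), (fun _ => 0); split=> //; rewrite big_ord0.
  by apply/matrixP=> i j; rewrite mxE Zk.
have [kn|nk] := ltnP k n; last first.
  by apply: IH psdZ _ => i j ki; have := leq_trans nk ki; rewrite leqNgt ltn_ord.
pose p := Ordinal kn; have [sZ pZ] := psdZ.
have rowk (i : 'I_n) : (k <= i)%N -> (i = p) \/ (k.+1 <= i)%N.
  rewrite leq_eqVlt => /orP[/eqP ki|]; last by right.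
  by left; apply: val_inj; rewrite /= -ki.
have [Zpp0|Zpp_pos] : Z p p = 0 \/ 0 < Z p p.
  have := pZ (delta_mx p 0); rewrite -/(bform Z _ _) bform_delta le_eqVlt.
  by case/orP=> [/eqP<-|]; [left|right].
  apply: IH => // i j /rowk[->|]; last exact: Zk.
  by rewrite (mxsymE p j sZ); exact: psd_zero_diag.
pose c : 'cV[R]_n := Z *m delta_mx p 0.
have cE i : c i 0 = Z i p by rewrite /c -colE mxE.
have := @psd_schur _ _ Z (delta_mx p 0) psdZ; rewrite bform_delta => /(_ Zpp_pos).
rewrite -/c; clearbody c => schur.
rewrite -(subrK ((Z p p)^-1 *: (c *m c^T)) Z) addrC.
apply: rank1_sum_cons; last by rewrite invr_ge0 ltW.
apply: IH => // i j /rowk[->|ki]; rewrite !mxE big_ord1 !mxE !cE.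
  by rewrite (mxsymE j p sZ) mulrA mulVf ?mul1r ?subrr // gt_eqF.
by rewrite (Zk i j) ?(Zk i p) ?mul0r ?mulr0 ?subrr.
Qed.

Lemma rank1_sum_sandwich n m (lam : 'I_m -> R) (w : 'I_m -> 'cV[R]_n) (D : 'M[R]_n) :
  let X := \sum_p lam p *: (w p *m (w p)^T) in
  X *m D *m X = \sum_p \sum_q
     (lam p * lam q * bform D (w p) (w q)) *: (w p *m (w q)^T).
Proof.
rewrite /= !mulmx_suml; apply: eq_bigr => p _.
rewrite mulmx_sumr; apply: eq_bigr => q _.
rewrite -!scalemxAl -scalemxAr.
have -> : w p *m (w p)^T *m D *m (w q *m (w q)^T) =
          w p *m ((w p)^T *m D *m w q) *m (w q)^T by rewrite !mulmxA.
rewrite [(w p)^T *m D *m w q]mx11_scalar mul_mx_scalar -scalemxAl !scalerA.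
by congr (_ *: _); rewrite /bform; ring.
Qed.

(* If c is in the kernel of the entrywise square of a psd X, then the
   sandwich X diag(c) X vanishes: writing X = sum_p lam_p w_p w_p^T, the
   weighted trace sum_i c_i (X D X)_ii, which is 0, equals
   sum_pq lam_p lam_q (w_p^T D w_q)^2, a sum of nonnegative terms. *)
Lemma hadamard_kernel_sandwich n (X : 'M[R]_n) (c : 'cV[R]_n) : psd X ->
  hadamard_sq X *m c = 0 -> X *m diag_mx c^T *m X = 0.
Proof.
move=> psdX Hc; have [sX _] := psdX.
have [m [lam [w [l0 Xe]]]] := psd_rank1_sum psdX.
set D := diag_mx c^T; pose s p q := bform D (w p) (w q).
have sE p q : s p q = \sum_i w p i 0 * c i 0 * w q i 0.
  by rewrite /s /bform mul_mx_diag mxE; apply: eq_bigr => i _; rewrite !mxE.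
have XDX : X *m D *m X =
    \sum_p \sum_q (lam p * lam q * s p q) *: (w p *m (w q)^T).
  by rewrite Xe; exact: rank1_sum_sandwich.
have diag0 i : (X *m D *m X) i i = 0.
  have <- : (hadamard_sq X *m c) i 0 = 0 by rewrite Hc mxE.
  rewrite /D mul_mx_diag !mxE; apply: eq_bigr => j _.
  by rewrite !mxE (mxsymE j i sX); ring.
have weighted_trace : \sum_i c i 0 * (X *m D *m X) i i =
    \sum_p \sum_q lam p * lam q * s p q ^+ 2.
  rewrite XDX; under eq_bigr => i _ do rewrite summxE big_distrr /=.
  rewrite exchange_big /=; apply: eq_bigr => p _.
  under eq_bigr => i _ do rewrite summxE big_distrr /=.
  rewrite exchange_big /=; apply: eq_bigr => q _.
  rewrite expr2 mulrA [X in _ = _ * X]sE big_distrr /=; apply: eq_bigr => i _.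
  by rewrite mxE outerE; ring.
have trace_sum : \sum_p \sum_q lam p * lam q * s p q ^+ 2 = 0.
  by rewrite -weighted_trace big1 // => i _; rewrite diag0 mulr0.
have ge0 p q : 0 <= lam p * lam q * s p q ^+ 2.
  by apply: mulr_ge0; [apply: mulr_ge0; apply: l0 | apply: sqr_ge0].
have term0 p q : lam p * lam q * s p q = 0.
  have sum0 := psumr_eq0P (fun p _ => sumr_ge0 _ (fun q _ => ge0 p q)) trace_sum.
  have h := psumr_eq0P (fun q _ => ge0 p q) (sum0 p isT) (i := q) isT.
  apply/eqP; rewrite -sqrf_eq0; apply/eqP.
  have -> : (lam p * lam q * s p q) ^+ 2 =
            lam p * lam q * (lam p * lam q * s p q ^+ 2) by ring.
  by rewrite h mulr0.
rewrite XDX; apply: big1 => p _; apply: big1 => q _.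
by rewrite term0 scale0r.
Qed.

End Gram.

Section RangeFacts.
Variable R : realFieldType.

Lemma form_bound n (B : 'M[R]_n) (z : 'cV[R]_n) :
  `|bform B z z| <= (\sum_i \sum_j `|B i j|) * \sum_k z k 0 ^+ 2.
Proof.
set S := \sum_k z k 0 ^+ 2.
have zS k : `|z k 0| ^+ 2 <= S.
  rewrite -normrX ger0_norm ?sqr_ge0 // /S (bigD1 k) //= lerDl.
  by apply: sumr_ge0 => i _; apply: sqr_ge0.
rewrite bformE; apply: le_trans (ler_norm_sum _ _ _) _.
rewrite mulr_suml; apply: ler_sum => i _.
apply: le_trans (ler_norm_sum _ _ _) _.
rewrite mulr_suml; apply: ler_sum => j _.
have ha := zS i; have hb := zS j.
have a0 := normr_ge0 (z i 0); have b0 := normr_ge0 (z j 0).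
have ab : `|z i 0| * `|z j 0| <= S by nra.
by rewrite !normrM mulrAC [_ * S]mulrC ler_wpM2r.
Qed.

Lemma submx_kerP m p n (A : 'M[R]_(m, n)) (X : 'M[R]_(p, n)) :
  (A <= X)%MS <-> (forall v : 'cV[R]_n, X *m v = 0 -> A *m v = 0).
Proof.
split=> [sAX v Xv | H].
  have -> : A *m v = A *m pinvmx X *m (X *m v) by rewrite mulmxA mulmxKpV.
  by rewrite Xv mulmx0.
rewrite submxE; apply/eqP/matrixP => i j; rewrite [RHS]mxE.
have -> : (A *m cokermx X) i j = (A *m col j (cokermx X)) i 0.
  by rewrite [in RHS]colE [in RHS]mulmxA -[in RHS]colE [RHS]mxE.
by rewrite H ?mxE // colE mulmxA mulmx_coker mul0mx.
Qed.

Lemma congr_sym m n (P : 'M[R]_(m, n)) (A : 'M[R]_m) :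
  A^T = A -> (P^T *m A *m P)^T = P^T *m A *m P.
Proof. by move=> sA; rewrite !trmx_mul trmxK sA mulmxA. Qed.

Lemma sym_factor p n (P : 'M[R]_(p, n)) (A : 'M[R]_n) : A^T = A -> (A <= P)%MS ->
  A = P^T *m ((pinvmx P)^T *m A *m pinvmx P) *m P.
Proof.
move=> sA sAP; set B := _ *m A *m _.
have A1 : A = A *m pinvmx P *m P by rewrite mulmxKpV.
have A2 : A = P^T *m (pinvmx P)^T *m A.
  by have := congr1 trmx A1; rewrite !trmx_mul sA mulmxA.
by rewrite {1}A2 {1}A1 /B !mulmxA.
Qed.

End RangeFacts.

Section ElliptopePerturbations.
Variables (R : realFieldType) (n : nat) (X : 'M[R]_n).
Hypothesis eX : elliptope2 X.

Let sX : X^T = X. Proof. by case: eX. Qed.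
Let psdX : psd X. Proof. by case: eX => _ []. Qed.
Let diagX i : X i i = 1. Proof. by case: eX => _ []. Qed.

(* The form of a sandwich X B X is dominated by the form of X: the entries
   of X y are controlled by Cauchy-Schwarz and the unit diagonal of X. *)
Lemma sandwich_form_bound (B : 'M[R]_n) : exists2 K : R, 0 <= K &
  forall y, `|bform (X *m B *m X) y y| <= K * bform X y y.
Proof.
have beta0 : 0 <= \sum_i \sum_j `|B i j| by do 2![apply: sumr_ge0 => ? _].
exists ((\sum_i \sum_j `|B i j|) * n%:R); first by rewrite mulr_ge0 ?ler0n.
move=> y; have -> : bform (X *m B *m X) y y = bform B (X *m y) (X *m y).
  by rewrite /bform trmx_mul sX !mulmxA.
apply: le_trans (form_bound B (X *m y)) _; rewrite -mulrA ler_wpM2l //.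
have -> : n%:R * bform X y y = \sum_(k < n) bform X y y.
  by rewrite sumr_const card_ord mulr_natl.
apply: ler_sum => k _.
rewrite -bform_deltaL; apply: le_trans (psd_cauchy_schwarz _ _ psdX) _.
by rewrite bform_delta diagX mul1r.
Qed.

(* Dominated, symmetric, zero-diagonal directions are perturbations:
   X +- t A stays psd for t < 1/(K+1) and keeps the unit diagonal. *)
Lemma pert_of_form_bound (A : 'M[R]_n) (K : R) : A^T = A ->
  (forall i, A i i = 0) -> 0 <= K ->
  (forall y, `|bform A y y| <= K * bform X y y) -> pertE2 X A.
Proof.
move=> sA dA K0 bound; have Kp : 0 < K + 1 by lra.
split=> //; exists (K + 1)^-1; first by rewrite invr_gt0.
move=> t t0 teps.
have tK : t * K <= 1.
  have inv1 : (K + 1)^-1 * (K + 1) = 1 by rewrite mulVf // gt_eqF.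
  nra.
have pos y : 0 <= bform X y y + t * bform A y y /\ 0 <= bform X y y - t * bform A y y.
  have q0 : 0 <= bform X y y := psdX.2 y.
  by have /ler_normlP[] := bound y; split; nra.
have symD : (X + t *: A)^T = X + t *: A by rewrite linearD linearZ /= sX sA.
have symB : (X - t *: A)^T = X - t *: A by rewrite linearB linearZ /= sX sA.
split; (split; [|split]) => //.
- by split=> // v; rewrite -/(bform _ v v) bformDm bformZm; case: (pos v).
- by move=> i; rewrite !mxE diagX dA mulr0 addr0.
- by split=> // v; rewrite -/(bform _ v v) bformBm bformZm; case: (pos v).
- by move=> i; rewrite !mxE diagX dA mulr0 subr0.
Qed.

(* Conversely a perturbation is symmetric, has zero diagonal (the diagonal
   is pinned to 1) and vanishes on ker X (where X +- t A stay psd). *)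
Lemma pert_props (A : 'M[R]_n) : pertE2 X A ->
  [/\ A^T = A, (forall i, A i i = 0) & (A <= X)%MS].
Proof.
move=> [sA [eps e0 H]]; pose t := eps / 2.
have t0 : 0 < t by rewrite /t; lra.
have [[_ [psdP dP]] [_ [psdM _]]] : elliptope2 (X + t *: A) /\ elliptope2 (X - t *: A).
  by apply: H => //; rewrite /t; lra.
split=> // [i|].
  have := dP i; rewrite !mxE diagX => h.
  have /eqP : t * A i i = 0 by lra.
  by rewrite mulf_eq0 (gt_eqF t0) => /eqP.
apply/submx_kerP => v Xv.
have qX : bform X v v = 0 by rewrite /bform -mulmxA Xv mulmx0 mxE.
have hP : 0 <= bform (X + t *: A) v v := psdP.2 v.
have hM : 0 <= bform (X - t *: A) v v := psdM.2 v.
rewrite bformDm bformZm qX add0r pmulr_rge0 // in hP.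
rewrite bformBm bformZm qX sub0r oppr_ge0 pmulr_rle0 // in hM.
have qA : bform A v v = 0 by apply/eqP; rewrite eq_le hM hP.
have : (X + t *: A) *m v = 0.
  by apply: psd_kernel => //; rewrite bformDm bformZm qX qA mulr0 addr0.
rewrite mulmxDl Xv add0r -scalemxAl => /eqP; rewrite scaler_eq0 (gt_eqF t0).
by move/eqP.
Qed.

Lemma pertE2P (A : 'M[R]_n) :
  pertE2 X A <-> [/\ A^T = A, (forall i, A i i = 0) & (A <= X)%MS].
Proof.
split; first exact: pert_props.
case=> sA dA sAX; have AXBX := sym_factor sA sAX; rewrite sX in AXBX.
have [K K0 bound] := sandwich_form_bound ((pinvmx X)^T *m A *m pinvmx X).
by apply: (pert_of_form_bound sA dA K0) => y; rewrite {1}AXBX.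
Qed.

End ElliptopePerturbations.

Section MatrixSubspaces.
Variable F : fieldType.

Lemma row_free_inj m p (A : 'M[F]_(m, p)) :
  (forall v : 'rV[F]_m, v *m A = 0 -> v = 0) -> row_free A.
Proof.
move=> H; rewrite -kermx_eq0; apply/eqP/row_matrixP => i; rewrite row0.
by apply: H; rewrite -row_mul mulmx_ker row0.
Qed.

Section VecToSpace.
Variables m p : nat.

(* The coordinate change from mxvec to the vectType coordinates of
   matrices; it lets us turn a row space of vectorized matrices into a
   genuine subspace of 'M_(m, p). *)
Definition vec2coord (u : 'rV[F]_(m * p)) : 'rV[F]_(m * p) :=
  v2r (vec_mx u : 'M[F]_(m, p)).
Fact vec2coord_linear : linear vec2coord.
Proof. by move=> a u v; rewrite /vec2coord linearP /= linearP. Qed.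
HB.instance Definition _ := GRing.isLinear.Build F _ _ _ vec2coord vec2coord_linear.

Lemma vec2coord_free : row_free (lin1_mx vec2coord).
Proof.
apply: row_free_inj => u; rewrite mul_rV_lin1 => u0.
apply: (can_inj (@vec_mxK F m p)); apply: v2r_inj.
by rewrite -[v2r _]/(vec2coord u) u0 !linear0.
Qed.

Lemma vspace_of_mx k (K : 'M[F]_(k, m * p)) :
  exists U : {vspace 'M[F]_(m, p)},
    (forall A, A \in U = (mxvec A <= K)%MS) /\ \dim U = \rank K.
Proof.
exists (@mx2vs F 'M[F]_(m, p) _ (K *m lin1_mx vec2coord)); split.
  move=> A; rewrite memvE /subsetv /vline !genmxE.
  have -> : v2r A = mxvec A *m lin1_mx vec2coord.
    by rewrite mul_rV_lin1 -[RHS]/(v2r (vec_mx (mxvec A))) mxvecK.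
  by rewrite submxMfree // vec2coord_free.
by rewrite /dimv genmxE mxrankMfree // vec2coord_free.
Qed.

End VecToSpace.

Lemma count_le_ord (a r : nat) : (\sum_(b < r) ((b <= a)%N : nat) = minn r a.+1)%N.
Proof.
elim: r => [|r IH]; first by rewrite big_ord0.
by rewrite big_ord_recr /= IH; case: (leqP r a) => h /=; lia.
Qed.

Lemma double_triangular (r : nat) : (2 * \sum_(a < r) a.+1 = r * (r + 1))%N.
Proof.
elim: r => [|r IH]; first by rewrite big_ord0.
by rewrite big_ord_recr /= mulnDr IH; lia.
Qed.

Section SymmetricMatrices.
Variable r : nat.

Definition symvec : 'M[F]_(r * r) := kermx (1%:M - lin_mx (@trmx F r r)).

Lemma symvecP u : (u <= symvec)%MS = ((vec_mx u)^T == vec_mx u).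
Proof.
rewrite sub_kermx mulmxBr mulmx1 mul_rV_lin subr_eq0.
apply/eqP/eqP => [h | h]; first by rewrite [in RHS]h mxvecK.
by apply: (can_inj (@vec_mxK _ r r)); rewrite mxvecK -[RHS]/((vec_mx u)^T) h.
Qed.

Definition lower_pairs := [set pq : 'I_r * 'I_r | (pq.2 <= pq.1)%N].
Local Notation m := #|lower_pairs|.
Definition lower_idx (i : 'I_m) : 'I_(r * r) :=
  mxvec_index (enum_val i).1 (enum_val i).2.
Definition lower_proj : 'M[F]_(r * r, m) := \matrix_(K, i) (K == lower_idx i)%:R.

Lemma lower_projE (u : 'rV[F]_(r * r)) i : (u *m lower_proj) 0 i = u 0 (lower_idx i).
Proof.
rewrite mxE (bigD1 (lower_idx i)) //= mxE eqxx mulr1 big1 ?addr0 // => K /negPf nK.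
by rewrite mxE nK mulr0.
Qed.

Lemma lower_idx_onto (a b : 'I_r) : (b <= a)%N -> exists i, lower_idx i = mxvec_index a b.
Proof.
move=> ba; have Pab : (a, b) \in lower_pairs by rewrite inE.
by exists (enum_rank_in Pab (a, b)); rewrite /lower_idx enum_rankK_in.
Qed.

Lemma symvec_lower_inj : (symvec :&: kermx lower_proj)%MS = 0.
Proof.
apply/row_matrixP => i; rewrite row0.
have := row_sub i (symvec :&: kermx lower_proj)%MS; move: (row i _) => u.
rewrite sub_capmx symvecP sub_kermx => /andP[/eqP su /eqP uE].
apply/rowP => K; rewrite [RHS]mxE.
have uv a b : u 0 (mxvec_index a b) = vec_mx u a b by rewrite mxE.
case/mxvec_indexP: K => a b.
have [ba | ab] := leqP b a.
  by have [i' <-] := lower_idx_onto ba; rewrite -lower_projE uE mxE.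
have [i' fi] := lower_idx_onto (ltnW ab).
by rewrite uv -su mxE -uv -fi -lower_projE uE mxE.
Qed.

(* Every lower-triangle pattern is realized by a symmetric matrix: the
   symmetrized matrix unit of a lower pair projects to a unit vector. *)
Lemma lower_proj_onto : (1%:M <= symvec *m lower_proj)%MS.
Proof.
apply/row_subP => i; set pq := enum_val i.
pose C : 'M[F]_r := \matrix_(x, y)
   (((x == pq.1) && (y == pq.2)) || ((x == pq.2) && (y == pq.1)))%:R.
have Cs : (mxvec C <= symvec)%MS.
  rewrite symvecP mxvecK; apply/eqP/matrixP => x y; rewrite !mxE.
  by rewrite orbC (andbC (y == _)) (andbC (y == _)).
have -> : row i 1%:M = mxvec C *m lower_proj; last exact: submxMr.
apply/rowP => j; rewrite lower_projE /lower_idx mxvecE !mxE.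
have Pi := enum_valP i; have Pj := enum_valP j.
rewrite !inE -/pq in Pi Pj.
have [<-|ij] := eqVneq i j; first by rewrite !eqxx.
have nB1 : ~~ (((enum_val j).1 == pq.1) && ((enum_val j).2 == pq.2)).
  apply/andP => -[/eqP e1 /eqP e2]; case/eqP: ij; apply: enum_val_inj.
  by rewrite -/pq [RHS]surjective_pairing e1 e2 -surjective_pairing.
have nB2 : ~~ (((enum_val j).1 == pq.2) && ((enum_val j).2 == pq.1)).
  apply/andP => -[/eqP e1 /eqP e2]; apply: (negP nB1).
  have eab : pq.1 = pq.2 by apply/val_inj/eqP; rewrite eqn_leq Pi -e1 -e2 Pj.
  by rewrite e1 e2 eab !eqxx.
by rewrite (negPf nB1) (negPf nB2).
Qed.

(* Projecting onto the lower triangle is injective and onto, so symmetric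
   r x r matrices form a space of dimension r(r+1)/2. *)
Lemma rank_symvec : \rank symvec = ((r * (r + 1)) %/ 2)%N.
Proof.
have := mxrank_mul_ker symvec lower_proj.
rewrite symvec_lower_inj mxrank0 addn0 => <-.
have -> : \rank (symvec *m lower_proj) = m.
  apply/eqP; rewrite eqn_leq rank_leq_col /=.
  by have := mxrankS lower_proj_onto; rewrite mxrank1.
have -> : m = (\sum_(a < r) a.+1)%N.
  rewrite /lower_pairs -sum1dep_card big_mkcond /=.
  rewrite -(pair_bigA _ (fun a b : 'I_r => if (b <= a)%N then 1%N else 0%N)) /=.
  apply: eq_bigr => a _.
  rewrite (eq_bigr (fun b : 'I_r => ((b <= a)%N : nat))); last by move=> b _; case: ifP.
  by rewrite count_le_ord; apply/minn_idPr; apply: ltn_ord.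
by rewrite -double_triangular mulKn.
Qed.

End SymmetricMatrices.
End MatrixSubspaces.

Section PertDimension.
Variables (R : realFieldType) (n : nat) (X : 'M[R]_n).
Hypothesis eX : elliptope2 X.

Local Notation r := (\rank X).
Let sX : X^T = X. Proof. by case: eX. Qed.

(* A row basis B of X (r x n); C |-> B^T C B maps symmetric r x r matrices
   bijectively onto the symmetric matrices with rows in the row space of X. *)
Definition xbasis : 'M[R]_(r, n) := locked (row_base X).
Lemma xbasis_free : row_free xbasis. Proof. by rewrite /xbasis -lock; exact: row_base_free. Qed.
Lemma xbasis_eq : (xbasis :=: X)%MS. Proof. by rewrite /xbasis -lock; exact: eq_row_base. Qed.

Definition congr_mx : 'M[R]_(r * r, n * n) := lin_mulmx xbasis^T *m lin_mulmxr xbasis.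

Lemma congr_mxE (c : 'rV[R]_(r * r)) :
  vec_mx (c *m congr_mx) = xbasis^T *m vec_mx c *m xbasis.
Proof. by rewrite -{1}[c]vec_mxK /congr_mx mulmxA !mul_vec_lin mxvecK. Qed.

(* C |-> B^T C B is injective because B has full row rank. *)
Lemma congr_mx_free : row_free congr_mx.
Proof.
apply: row_free_inj => c cP.
have := congr1 vec_mx cP; rewrite congr_mxE linear0 => /eqP.
rewrite mulmx_free_eq0 ?xbasis_free // => /eqP/(congr1 trmx).
rewrite trmx_mul trmxK linear0 => /eqP; rewrite mulmx_free_eq0 ?xbasis_free //.
by move/eqP/(congr1 trmx); rewrite trmxK linear0 => /(congr1 mxvec); rewrite vec_mxK linear0.
Qed.

Definition symrange := symvec R r *m congr_mx.

Lemma mem_symrange (u : 'rV[R]_(n * n)) :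
  (u <= symrange)%MS <-> ((vec_mx u)^T = vec_mx u /\ (vec_mx u <= X)%MS).
Proof.
split.
  case/submxP => D ->; rewrite mulmxA.
  have : (D *m symvec R r <= symvec R r)%MS by apply: submxMl.
  rewrite symvecP => /eqP cs.
  rewrite congr_mxE; split; first exact: congr_sym.
  by rewrite -xbasis_eq submxMl.
case=> sA; rewrite -xbasis_eq => sAB.
have AC := sym_factor sA sAB; set C := _ *m vec_mx u *m _ in AC.
have Cs : (mxvec C <= symvec R r)%MS.
  by rewrite symvecP mxvecK /C congr_sym.
rewrite -[u]vec_mxK AC -(mxvecK C) -congr_mxE vec_mxK.
exact: submxMr.
Qed.

Lemma rank_symrange : \rank symrange = ((r * (r + 1)) %/ 2)%N.
Proof. by rewrite /symrange mxrankMfree ?congr_mx_free // rank_symvec. Qed.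

Definition diag_proj : 'M[R]_(n * n, n) := \matrix_(K, i) (K == mxvec_index i i)%:R.

Lemma diag_projE (u : 'rV[R]_(n * n)) i : (u *m diag_proj) 0 i = vec_mx u i i.
Proof.
rewrite mxE (bigD1 (mxvec_index i i)) //= mxE eqxx mulr1 big1 ?addr0.
  by rewrite mxE.
by move=> K /negPf nK; rewrite mxE nK mulr0.
Qed.

Definition pert_mx := (symrange :&: kermx diag_proj)%MS.

Lemma mem_pert_mx (A : 'M[R]_n) : (mxvec A <= pert_mx)%MS <-> pertE2 X A.
Proof.
rewrite /pert_mx sub_capmx sub_kermx (pertE2P eX); split.
  move/andP => [/mem_symrange []]; rewrite mxvecK => sA sAX /eqP D0.
  by split=> // i; rewrite -[A]mxvecK -diag_projE D0 mxE.
case=> sA dA sAX; apply/andP; split; first by apply/mem_symrange; rewrite mxvecK.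
by apply/eqP/rowP => i; rewrite diag_projE mxvecK dA mxE.
Qed.

Lemma diag_orth (A : 'M[R]_n) (c : 'cV[R]_n) : A^T = A -> (A <= X)%MS ->
  hadamard_sq X *m c = 0 -> \sum_k A k k * c k 0 = 0.
Proof.
move=> sA sAX Hc; have [_ [psdX _]] := eX.
have AXBX := sym_factor sA sAX; rewrite sX in AXBX.
transitivity (\tr (A *m diag_mx c^T)).
  by rewrite /mxtrace; apply: eq_bigr => k _; rewrite mul_mx_diag !mxE.
rewrite AXBX -mulmxA mxtrace_mulC !mulmxA (hadamard_kernel_sandwich psdX Hc).
by rewrite !mul0mx /mxtrace big1 // => k _; rewrite mxE.
Qed.

(* The diagonals of symmetric range matrices span the row space of the
   entrywise square of X: "<=" by trace orthogonality, ">=" since row i of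
   that square is the diagonal of the rank-one range matrix X_i X_i^T. *)
Lemma diag_symrange : (symrange *m diag_proj :=: hadamard_sq X)%MS.
Proof.
apply/eqmxP/andP; split.
  apply/row_subP => i; rewrite row_mul.
  have /mem_symrange [sA sAX] := row_sub i symrange.
  set u := row i symrange in sA sAX *.
  rewrite submxE; apply/eqP/rowP => j; rewrite [RHS]mxE.
  have -> : (u *m diag_proj *m cokermx (hadamard_sq X)) 0 j =
      \sum_k vec_mx u k k * (col j (cokermx (hadamard_sq X))) k 0.
    by rewrite mxE; apply: eq_bigr => k _; rewrite diag_projE !mxE.
  apply: diag_orth sA sAX _.
  by rewrite colE mulmxA mulmx_coker mul0mx.
apply/row_subP => i; pose A := col i X *m row i X.
have Ar : (mxvec A <= symrange)%MS.
  apply/mem_symrange; rewrite mxvecK; split.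
    by rewrite /A trmx_mul tr_row tr_col sX.
  exact: submx_trans (submxMl _ _) (row_sub _ _).
have -> : row i (hadamard_sq X) = mxvec A *m diag_proj; last exact: submxMr.
apply/rowP => k; rewrite diag_projE mxvecK /A !mxE big_ord1 !mxE (mxsymE k i sX).
by rewrite expr2.
Qed.

(* Rank-nullity for the diagonal map on symrange. *)
Lemma rank_pert_mx :
  (\rank pert_mx + \rank (hadamard_sq X))%N = ((r * (r + 1)) %/ 2)%N.
Proof.
rewrite -rank_symrange -(mxrank_mul_ker symrange diag_proj).
by rewrite diag_symrange addnC.
Qed.

(* The entrywise square of X has unit diagonal, hence is nonzero. *)
Lemma rank_pert_mx_lt (i : 'I_n) : (\rank pert_mx + 1 <= (r * (r + 1)) %/ 2)%N.
Proof.
rewrite -rank_pert_mx leq_add2l lt0n mxrank_eq0; apply/eqP => H0.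
have := congr1 (fun A : 'M[R]_n => A i i) H0; case: eX => _ [_ dX].
by rewrite /= !mxE dX expr1n => /eqP; rewrite oner_eq0.
Qed.

Lemma pert_vspace : exists V : {vspace 'M[R]_n},
  (forall A, A \in V <-> pertE2 X A) /\ \dim V = \rank pert_mx.
Proof.
have [V [memV dimV]] := vspace_of_mx pert_mx.
by exists V; split=> // A; rewrite memV mem_pert_mx.
Qed.

End PertDimension.

Lemma vecc_E (R : realFieldType) n (A : 'M[R]_n) i j :
  vecc A (mxvec_index i j) 0 = A i j.
Proof. by rewrite /vecc mxE mxvecE. Qed.

Lemma vecc_vec_mx (R : realFieldType) n (u : 'cV[R]_(n * n)) : vecc (vec_mx u^T) = u.
Proof. by rewrite /vecc vec_mxK trmxK. Qed.

Lemma rank_outer (R : realFieldType) n (c : 'cV[R]_n) i :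
  c i 0 != 0 -> \rank (c *m c^T) = 1%N.
Proof.
move=> ci; apply/eqP; rewrite eqn_leq (leq_trans (mxrankM_maxl _ _) (rank_leq_col _)).
rewrite lt0n mxrank_eq0; apply/eqP => /(congr1 (fun A : 'M[R]_n => A i i)).
by rewrite outerE mxE => /eqP; rewrite mulf_eq0 orbb (negPf ci).
Qed.

(* An extreme point of the elliptope admits no nonzero perturbation:
   X is the midpoint of X + t A and X - t A. *)
Lemma extreme_no_pert (R : realFieldType) n (X A : 'M[R]_n) :
  extreme_E2 X -> pertE2 X A -> A = 0.
Proof.
move=> [_ ext] [sA [eps e0 H]]; pose t := eps / 2.
have t0 : 0 < t by rewrite /t; lra.
have [eP eM] : elliptope2 (X + t *: A) /\ elliptope2 (X - t *: A).
  by apply: H => //; rewrite /t; lra.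
have half0 : (0 : R) < 2^-1 by rewrite invr_gt0; lra.
have half1 : (2^-1 : R) < 1 by rewrite invf_lt1; lra.
have mid : X = 2^-1 *: (X + t *: A) + (1 - 2^-1) *: (X - t *: A).
  have -> : (1 - 2^-1 : R) = 2^-1 by field.
  rewrite -scalerDr addrACA subrr addr0 -mulr2n -scaler_nat scalerA.
  by rewrite mulVf ?scale1r // pnatr_eq0.
have [XA _] := ext _ _ _ eP eM half0 half1 mid.
have /eqP : t *: A = 0 by rewrite -(addKr X (t *: A)) XA addNr.
by rewrite scaler_eq0 (gt_eqF t0) => /eqP.
Qed.

Section PseudoMoments.
Variables (R : realFieldType) (N : nat).
Local Notation n := N.+1.
Variables (X : 'M[R]_n) (Y : 'M[R]_(n * n)).
Hypothesis PY : pseudomoment4 Y.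
Hypothesis EX : extends Y X.

Local Notation y := (Yent Y).
Local Notation gap := (Y - vecc X *m (vecc X)^T).

Lemma moment_psd : psd Y. Proof. by case: PY. Qed.
Lemma moment_sym : Y^T = Y. Proof. by case: moment_psd. Qed.

Lemma swap12 i j k l : y i j k l = y j i k l.
Proof. by case: PY => _ _ _ /(_ i j k l) []. Qed.
Lemma swap13 i j k l : y i j k l = y k j i l.
Proof. by case: PY => _ _ _ /(_ i j k l) []. Qed.
Lemma swap34 i j k l : y i j k l = y i j l k.
Proof. by case: PY => _ _ _ /(_ i j k l) []. Qed.
Lemma swap23 i j k l : y i j k l = y i k j l.
Proof. by rewrite (swap12 i j) (swap13 j i) (swap12 k i). Qed.
Lemma swap_pairs i j k l : y i j k l = y k l i j.
Proof. by rewrite /Yent (mxsymE _ _ moment_sym). Qed.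
Lemma moment_kk i j k k' : y i j k k = y i j k' k'.
Proof. by case: PY => _ H _ _; apply: H. Qed.
Lemma moment_unit i : y i i i i = 1.
Proof. by case: PY => _ _ H _; apply: H. Qed.

Lemma moment_00 i j : y i j ord0 ord0 = X i j.
Proof. by rewrite (swap12 i j) (swap13 j i) (swap34 ord0 i); apply: EX. Qed.
Lemma moment_ii i k l : y i i k l = X k l.
Proof. by rewrite swap_pairs (moment_kk k l i ord0) moment_00. Qed.
Lemma moment_kikj i j k : y k i k j = X i j.
Proof. by rewrite swap23 moment_ii. Qed.

Lemma ext_sym : X^T = X.
Proof. by apply/matrixP => i j; rewrite mxE -!EX swap_pairs. Qed.
Lemma ext_diag i : X i i = 1.
Proof. by rewrite -(moment_kikj i i i) moment_unit. Qed.

(* The vector sum_i v_i e_(k i), i.e. vec(e_k v^T). *)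
Definition kslice (k : 'I_n) (v : 'cV[R]_n) : 'cV[R]_(n * n) :=
  \sum_i v i 0 *: delta_mx (mxvec_index k i) 0.

Lemma moment_compress k (v : 'cV[R]_n) :
  bform Y (kslice k v) (kslice k v) = bform X v v.
Proof.
rewrite bform_combo bformE; apply: eq_bigr => i _; apply: eq_bigr => j _.
by rewrite -[Y _ _]/(y k i k j) moment_kikj mulrAC.
Qed.

Lemma ext_elliptope : elliptope2 X.
Proof.
split; first exact: ext_sym.
split; last exact: ext_diag.
split=> [|v]; first exact: ext_sym.
by rewrite -/(bform X v v) -(moment_compress ord0); apply: moment_psd.2.
Qed.

(* The (00) column of Y is vec X, and Y_{(00)(00)} = 1, so the gap
   Y - vec X vec X^T is the Schur complement of that entry. *)
Lemma gap_psd : psd gap.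
Proof.
have Ye : Y *m delta_mx (mxvec_index ord0 ord0) 0 = vecc X.
  apply/colP => K; rewrite -colE [LHS]mxE; case/mxvec_indexP: K => i j.
  by rewrite vecc_E -[Y _ _]/(y i j ord0 ord0) moment_00.
have := @psd_schur R _ Y (delta_mx (mxvec_index ord0 ord0) 0) moment_psd.
rewrite bform_delta -[Y _ _]/(y ord0 ord0 ord0 ord0) moment_unit Ye invr1 scale1r.
by apply; apply: ltr01.
Qed.

Lemma gapE i j k l :
  gap (mxvec_index i j) (mxvec_index k l) = y i j k l - X i j * X k l.
Proof. by rewrite [LHS]mxE [X in _ + X]mxE outerE !vecc_E. Qed.

(* For v in ker X the vector p = kslice k v is isotropic for the gap (its
   Y-form is v^T X v = 0), hence annihilated by it. *)
Lemma gap_kernel k (v : 'cV[R]_n) : X *m v = 0 -> gap *m kslice k v = 0.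
Proof.
move=> Xv; set p := kslice k v.
have qX : bform X v v = 0 by rewrite /bform -mulmxA Xv mulmx0 mxE.
apply: psd_kernel gap_psd _.
have h0 : 0 <= bform gap p p := gap_psd.2 p.
move: h0; rewrite bformBm bform_outer moment_compress qX sub0r.
have := sqr_ge0 (((vecc X)^T *m p) 0 0); rewrite expr2 => h1 h0.
lra.
Qed.

Lemma gap_col_pert (w : 'cV[R]_(n * n)) : pertE2 X (vec_mx (gap *m w)^T).
Proof.
have symG : gap^T = gap by case: gap_psd.
set A := vec_mx _; have AE i j : A i j = (gap *m w) (mxvec_index i j) 0.
  by rewrite !mxE.
apply/(pertE2P ext_elliptope); split.
- apply/matrixP => i j; rewrite mxE !AE !mxE; apply: eq_bigr => K _.
  case/mxvec_indexP: K => k l.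
  by rewrite !gapE (swap12 j i) (mxsymE j i ext_sym).
- move=> i; rewrite AE mxE; apply: big1 => K _; case/mxvec_indexP: K => k l.
  by rewrite gapE moment_ii ext_diag mul1r subrr mul0r.
apply/submx_kerP => v Xv; apply/colP => k; rewrite [RHS]mxE.
have -> : (A *m v) k 0 = bform gap w (kslice k v).
  rewrite mxE bform_sumr; apply: eq_bigr => i _.
  by rewrite bformZr (bform_sym _ _ symG) bform_deltaL AE mulrC.
by rewrite /bform -mulmxA gap_kernel // mulmx0 mxE.
Qed.

Lemma gap_eigvec (v : 'cV[R]_(n * n)) (lam : R) :
  lam != 0 -> gap *m v = lam *: v -> exists A : 'M[R]_n, pertE2 X A /\ v = vecc A.
Proof.
move=> l0 Hv; exists (vec_mx (gap *m (lam^-1 *: v))^T).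
split; first exact: gap_col_pert.
by rewrite vecc_vec_mx -scalemxAr Hv scalerA mulVf // scale1r.
Qed.

(* Y = gap + vec X vec X^T, the gap has rows in vec(pert X), and the
   second term has rank at most one. *)
Lemma rank_moment_le : (\rank Y <= \rank (pert_mx X) + 1)%N.
Proof.
have symG : gap^T = gap by case: gap_psd.
have gap_sub : (gap <= pert_mx X)%MS.
  apply/row_subP => j.
  move/(mem_pert_mx ext_elliptope): (gap_col_pert (delta_mx j 0)).
  by rewrite vec_mxK -colE tr_col symG.
rewrite -{1}(subrK (vecc X *m (vecc X)^T) Y).
apply: leq_trans (mxrank_add _ _) _; apply: leq_add; first exact: mxrankS.
exact: leq_trans (mxrankM_maxl _ _) (rank_leq_col _).
Qed.

(* At an extreme point the gap vanishes, so Y = vec X vec X^T and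
   X = x x^T for the sign vector x = first column of X. *)
Lemma extreme_moment : extreme_E2 X -> Y = vecc X *m (vecc X)^T.
Proof.
move=> ext; apply/eqP; rewrite -subr_eq0; apply/eqP/matrixP => I J; rewrite [RHS]mxE.
have := extreme_no_pert ext (gap_col_pert (delta_mx J 0)).
move/(congr1 mxvec); rewrite vec_mxK linear0 => /(congr1 trmx); rewrite trmxK linear0.
by move/(congr1 (fun A : 'cV[R]_(n * n) => A I 0)); rewrite -colE !mxE.
Qed.

Lemma extreme_rank_one : extreme_E2 X ->
  [/\ \rank Y = 1%N, \rank X = 1%N &
      exists x : 'cV[R]_n,
        [/\ (forall i, x i 0 = 1 \/ x i 0 = -1), X = x *m x^T &
            Y = vecc (x *m x^T) *m (vecc (x *m x^T))^T]].
Proof.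
move=> ext; have YM := extreme_moment ext.
pose x : 'cV[R]_n := col ord0 X.
have Xx : X = x *m x^T.
  apply/matrixP => i j; rewrite outerE !mxE -[LHS]EX /Yent YM outerE !vecc_E.
  by rewrite (mxsymE ord0 i ext_sym) (mxsymE ord0 j ext_sym).
have x_sign i : x i 0 = 1 \/ x i 0 = -1.
  have := ext_diag i; rewrite Xx outerE -expr2 => /eqP.
  by rewrite sqrf_eq1 => /orP[/eqP->|/eqP->]; [left|right].
have x0 : x ord0 0 != 0 by case: (x_sign ord0) => ->; rewrite ?oppr_eq0 oner_eq0.
split; first by rewrite YM (rank_outer (i := mxvec_index ord0 ord0)) // vecc_E ext_diag oner_eq0.
  by rewrite Xx (rank_outer x0).
by exists x; rewrite -Xx.
Qed.

End PseudoMoments.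

Theorem theorem3 (R : realFieldType) (N : nat) (X : 'M[R]_N.+1)
    (Y : 'M[R]_(N.+1 * N.+1)) :
  elliptope4 X -> pseudomoment4 Y -> extends Y X ->
  let M := vecc X *m (vecc X)^T in
  let r := \rank X in
  [/\ psd (Y - M),
      (forall (v : 'cV[R]_(N.+1 * N.+1)) (lam : R),
          v != 0 -> lam != 0 -> (Y - M) *m v = lam *: v ->
          exists A : 'M[R]_N.+1, pertE2 X A /\ v = vecc A),
      (exists V : {vspace 'M[R]_N.+1},
          [/\ (forall A, A \in V <-> pertE2 X A),
              (\rank Y <= \dim V + 1)%N,
              (\dim V + \rank (hadamard_sq X) = (r * (r + 1)) %/ 2)%N &
              (\dim V + 1 <= (r * (r + 1)) %/ 2)%N]) &
      (extreme_E2 X ->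
         [/\ \rank Y = 1%N, r = 1%N &
             exists x : 'cV[R]_N.+1,
               [/\ (forall i, x i 0 = 1 \/ x i 0 = -1),
                   X = x *m x^T &
                   Y = vecc (x *m x^T) *m (vecc (x *m x^T))^T]])].
Proof.
move=> _ PY EX M r.
have eX := ext_elliptope PY EX.
have [V [memV dimV]] := pert_vspace eX.
split.
- exact: gap_psd PY EX.
- by move=> v lam _; rewrite /M; exact: gap_eigvec.
- exists V; rewrite dimV; split=> //.
  + exact: rank_moment_le PY EX.
  + exact: rank_pert_mx eX.
  + exact: rank_pert_mx_lt eX ord0.
- exact: extreme_rank_one PY EX.
Qed.
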